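(* Let $R$ be a finite ring with identity. Then $R$ is a Carmichael ring if and only if $$R \cong \mathbb{F}_{q_1}\times\cdots\times\mathbb{F}_{q_k}$$ for some integer $k\ge 2$, where for each $1\le i\le k$, $\mathbb{F}_{q_i}$ is a finite field with $q_i$ elements and $q_i-1$ divides $|R|-1$.
   Context: A finite ring $R$ is called a Carmichael ring if $R$ is not a field and $a^{|R|}=a$ for every $a\in R$, where $|R|$ denotes the number of elements of $R$. *)

From HB Require Import structures.
From mathcomp Require Import all_boot all_order all_algebra.
Set Implicit Arguments. Unset Strict Implicit. Unset Printing Implicit Defensive.
Import GRing.Theory.
Local Open Scope ring_scope.

(* A ring is a field: commutative, and every nonzero element has a
   two-sided multiplicative inverse (1 != 0 is built into nzRingType). *)
Definition is_field (R : nzRingType) : Prop :=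
  (forall x y : R, x * y = y * x) /\
  (forall x : R, x != 0 -> exists y : R, y * x = 1 /\ x * y = 1).

Definition carmichael_ring (R : finNzRingType) : Prop :=
  ~ is_field R /\ forall a : R, a ^+ #|R| = a.

Definition ring_iso_prod (R : nzRingType) (k : nat) (F : 'I_k -> nzRingType)
  (f : R -> forall i : 'I_k, F i) : Prop :=
  bijective f /\
  (forall x y i, f (x + y) i = f x i + f y i) /\
  (forall x y i, f (x * y) i = f x i * f y i) /\
  (forall i, f 1 i = 1).

From HB Require Import structures.
From mathcomp Require Import all_boot all_order all_algebra fingroup.
From mathcomp Require Import cyclic finfield.
From Stdlib Require Import FunctionalExtensionality.
Set Implicit Arguments. Unset Strict Implicit. Unset Printing Implicit Defensive.
Import GRing.Theory.
Local Open Scope ring_scope.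

(* A Carmichael ring satisfies a ^+ (m + 2) = a with m + 2 = |R|.  Hence it is
   reduced and its idempotents are central, so its primitive idempotents e_i
   are pairwise orthogonal and sum to 1, and R is the product of the corner
   rings R e_i.  In R e_i every nonzero x satisfies x ^+ (m + 1) = e_i, so the
   corner is a finite domain, hence a field (Wedderburn), whose unit group
   has exponent dividing m + 1 = |R| - 1.  Conversely a^|R| = a holds
   componentwise in a product of such fields, and a product of at least two
   fields has zero divisors. *)

Section CornerRing.
Variables (R : nzRingType) (e : R).
Hypotheses (eC : forall x, e * x = x * e) (ee : e * e = e) (e_neq0 : e != 0).

(* The hypotheses are phantom arguments of the type, so that the ring
   structures below can be canonical. *)
Definition corner of (forall x, e * x = x * e) & e * e = e & e != 0 :=
  {x : R | x * e == x}.
Local Notation eR := (corner eC ee e_neq0).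
HB.instance Definition _ := SubChoice.on eR.

Lemma corner_mule (x : eR) : val x * e = val x.
Proof. exact/eqP/(valP x). Qed.

Fact corner_proj_subproof x : x * e * e == x * e.
Proof. by rewrite -mulrA ee. Qed.
Definition corner_proj x : eR := exist _ (x * e) (corner_proj_subproof x).

Lemma corner_projE x : val (corner_proj x) = x * e. Proof. by []. Qed.

Definition corner_zero := corner_proj 0.
Definition corner_add (x y : eR) := corner_proj (val x + val y).
Definition corner_opp (x : eR) := corner_proj (- val x).
Definition corner_mul (x y : eR) := corner_proj (val x * val y).
Definition corner_one := corner_proj 1.

Let val_add x y : val (corner_add x y) = val x + val y.
Proof. by rewrite corner_projE mulrDl !corner_mule. Qed.
Let val_opp x : val (corner_opp x) = - val x.
Proof. by rewrite corner_projE mulNr corner_mule. Qed.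
Let val_mul x y : val (corner_mul x y) = val x * val y.
Proof. by rewrite corner_projE -mulrA corner_mule. Qed.
Let val_zero : val corner_zero = 0.
Proof. by rewrite corner_projE mul0r. Qed.
Let val_one : val corner_one = e.
Proof. by rewrite corner_projE mul1r. Qed.

Let cE := (val_add, val_opp, val_mul, val_zero, val_one).

Fact corner_addA : associative corner_add.
Proof. by move=> x y z; apply: val_inj; rewrite !cE addrA. Qed.
Fact corner_addC : commutative corner_add.
Proof. by move=> x y; apply: val_inj; rewrite !cE addrC. Qed.
Fact corner_add0r : left_id corner_zero corner_add.
Proof. by move=> x; apply: val_inj; rewrite !cE add0r. Qed.
Fact corner_addNr : left_inverse corner_zero corner_opp corner_add.
Proof. by move=> x; apply: val_inj; rewrite !cE addNr. Qed.
HB.instance Definition _ := GRing.isZmodule.Build eR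
  corner_addA corner_addC corner_add0r corner_addNr.

Fact corner_mulA : associative corner_mul.
Proof. by move=> x y z; apply: val_inj; rewrite !cE mulrA. Qed.
Fact corner_mul1r : left_id corner_one corner_mul.
Proof. by move=> x; apply: val_inj; rewrite !cE eC corner_mule. Qed.
Fact corner_mulr1 : right_id corner_one corner_mul.
Proof. by move=> x; apply: val_inj; rewrite !cE corner_mule. Qed.
Fact corner_mulDl : left_distributive corner_mul corner_add.
Proof. by move=> x y z; apply: val_inj; rewrite !cE mulrDl. Qed.
Fact corner_mulDr : right_distributive corner_mul corner_add.
Proof. by move=> x y z; apply: val_inj; rewrite !cE mulrDr. Qed.
Fact corner_one_neq0 : corner_one != corner_zero.
Proof. by apply: contraNneq e_neq0 => /(congr1 val) /eqP; rewrite !cE. Qed.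
HB.instance Definition _ := GRing.Zmodule_isNzRing.Build eR
  corner_mulA corner_mul1r corner_mulr1 corner_mulDl corner_mulDr corner_one_neq0.

Lemma corner_val0 : val (0 : eR) = 0. Proof. exact: val_zero. Qed.
Lemma corner_val1 : val (1 : eR) = e. Proof. exact: val_one. Qed.
Lemma corner_valD (x y : eR) : val (x + y) = val x + val y.
Proof. exact: val_add. Qed.
Lemma corner_valM (x y : eR) : val (x * y) = val x * val y.
Proof. exact: val_mul. Qed.

Lemma corner_val_eq0 (x : eR) : (val x == 0) = (x == 0).
Proof. by rewrite -corner_val0 (inj_eq val_inj). Qed.

Lemma corner_valX (x : eR) n : val (x ^+ n.+1) = val x ^+ n.+1.
Proof.
by elim: n => [|n IHn]; rewrite ?expr1 // exprS corner_valM IHn -exprS.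
Qed.
End CornerRing.

Section ExpIdentity.
Variables (R : nzRingType) (m : nat).
Hypothesis expR : forall a : R, a ^+ m.+2 = a.

Lemma sqr_eq0 (a : R) : a * a = 0 -> a = 0.
Proof. by move=> aa0; rewrite -(expR a) !exprSr -mulrA aa0 mulr0. Qed.

(* For an idempotent e, both e x (1 - e) and (1 - e) x e square to zero. *)
Lemma idem_central (e x : R) : e * e = e -> e * x = x * e.
Proof.
move=> ee.
have e_1e : e * (1 - e) = 0 by rewrite mulrBr mulr1 ee subrr.
have _1e_e : (1 - e) * e = 0 by rewrite mulrBl mul1r ee subrr.
have /sqr_eq0 : e * x * (1 - e) * (e * x * (1 - e)) = 0.
  by rewrite !mulrA -[e * x * (1 - e) * e]mulrA _1e_e mulr0 !mul0r.
have /sqr_eq0 : (1 - e) * x * e * ((1 - e) * x * e) = 0.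
  by rewrite !mulrA -[(1 - e) * x * e * (1 - e)]mulrA e_1e mulr0 !mul0r.
rewrite !mulrBl !mul1r => /subr0_eq xe_exe.
by rewrite mulrBr mulr1 => /subr0_eq ->.
Qed.

Lemma exp_idem (a : R) : a ^+ m.+1 * a ^+ m.+1 = a ^+ m.+1.
Proof. by rewrite -exprD addSnnS exprD expR -exprSr. Qed.
End ExpIdentity.

Definition prim_idem (R : finNzRingType) : {set R} :=
  [set e : R | [&& e * e == e, e != 0 &
    [forall f : R, (f * f == f) && (f * e == f) ==> (f == 0) || (f == e)]]].

Lemma prim_idemP (R : finNzRingType) (e : R) :
  reflect [/\ e * e = e, e != 0 &
           forall f, f * f = f -> f * e = f -> f = 0 \/ f = e]
          (e \in prim_idem R).
Proof.
rewrite inE; apply: (iffP and3P) => [[/eqP ee e0 /forallP minE] | [ee e0 minE]].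
  split=> // f ff fe; have := minE f; rewrite ff fe !eqxx /=.
  by case/orP=> /eqP; [left | right].
split=> //; first exact/eqP.
apply/forallP=> f; apply/implyP=> /andP[/eqP ff /eqP fe].
by case: (minE f ff fe) => ->; rewrite eqxx ?orbT.
Qed.

Section PrimitiveIdempotents.
Variables (R : finNzRingType) (m : nat).
Hypothesis expR : forall a : R, a ^+ m.+2 = a.

Lemma prim_idem_central (e : R) : e \in prim_idem R -> forall x, e * x = x * e.
Proof. by case/prim_idemP=> ee _ _ x; apply: (idem_central expR). Qed.

Lemma prim_idem_orth (e f : R) :
  e \in prim_idem R -> f \in prim_idem R -> e != f -> e * f = 0.
Proof.
move=> /prim_idemP[ee _ minE] /prim_idemP[ff _ minF] e_neq_f.
have efe : e * f * e = e * f by rewrite -mulrA (idem_central expR e ff) mulrA ee.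
have efef : e * f * (e * f) = e * f by rewrite mulrA efe -mulrA ff.
have eff : e * f * f = e * f by rewrite -mulrA ff.
case: (minE _ efef efe) => // ef_e; case: (minF _ efef eff) => // ef_f.
by rewrite -ef_e ef_f eqxx in e_neq_f.
Qed.

Lemma prim_idem_exp (e x : R) :
  e \in prim_idem R -> x * e = x -> x != 0 -> x ^+ m.+1 = e.
Proof.
move=> /prim_idemP[_ _ minE] xe x_neq0.
have xm_neq0 : x ^+ m.+1 != 0.
  by apply: contraNneq x_neq0 => xm0; rewrite -(expR x) exprSr xm0 mul0r.
have xme : x ^+ m.+1 * e = x ^+ m.+1 by rewrite exprSr -mulrA xe.
by case: (minE _ (exp_idem expR x) xme) => // xm0; rewrite xm0 eqxx in xm_neq0.
Qed.

Lemma prim_idem_below (c : R) :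
  c * c = c -> c != 0 -> exists2 e, e \in prim_idem R & e * c = e.
Proof.
move: {2}#|[pred x : R | x * c == x]| (leqnn #|[pred x : R | x * c == x]|) => n.
elim: n c => [|n IHn] c.
  by rewrite leqn0 => /eqP/card0_eq/(_ c); rewrite !inE => /negbT/eqP.
move=> le_n cc c_neq0.
have [cP | ] := boolP (c \in prim_idem R); first by exists c.
rewrite inE cc eqxx c_neq0 /= => /forallPn[f].
rewrite negb_imply => /andP[/andP[/eqP ff /eqP fc] /norP[f_neq0 f_neq_c]].
have [|e eP ef] := IHn f _ ff f_neq0; last by exists e; rewrite // -ef -mulrA fc.
rewrite -ltnS; apply: leq_trans le_n; apply/proper_card/properP; split.
  by apply/subsetP=> x; rewrite !inE => /eqP xf; rewrite -xf -mulrA fc.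
by exists c; rewrite !inE ?cc // -(idem_central expR c ff) fc.
Qed.

(* 1 - (sum of the primitive idempotents) is an idempotent with no primitive
   idempotent below it. *)
Lemma sum_prim_idem : \sum_(e in prim_idem R) e = 1.
Proof.
set s := \sum_(e in prim_idem R) e.
have es e : e \in prim_idem R -> e * s = e.
  move=> eP; rewrite mulr_sumr (bigD1 e) //= big1 ?addr0.
    by case/prim_idemP: eP.
  by move=> f /andP[fP fe]; apply: prim_idem_orth; rewrite // eq_sym.
have ss : s * s = s.
  rewrite {2}/s mulr_sumr; apply: eq_bigr => e eP.
  by rewrite -prim_idem_central ?es.
have cc : (1 - s) * (1 - s) = 1 - s.
  by rewrite mulrBl mul1r mulrBr mulr1 ss subrr subr0.
have [/subr0_eq // | c_neq0] := eqVneq (1 - s) 0.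
have [e eP] := prim_idem_below cc c_neq0.
rewrite mulrBr mulr1 es // subrr => /esym/eqP.
by case/prim_idemP: eP => _ /negPf ->.
Qed.
End PrimitiveIdempotents.

Section CornerField.
Variables (R : finNzRingType) (m : nat).
Hypothesis expR : forall a : R, a ^+ m.+2 = a.
Variables (e : R) (eP : e \in prim_idem R).

Let eC := prim_idem_central expR eP.
Let ee : e * e = e. Proof. by case/prim_idemP: eP. Qed.
Let e_neq0 : e != 0. Proof. by case/prim_idemP: eP. Qed.
Local Notation eR := (corner eC ee e_neq0).
HB.instance Definition _ := Finite.on eR.

Lemma corner_expS (x : eR) : x != 0 -> x ^+ m.+1 = 1.
Proof.
move=> x_neq0; apply: val_inj; rewrite corner_valX corner_val1.
by apply: prim_idem_exp; rewrite ?corner_mule ?corner_val_eq0.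
Qed.

Definition corner_inv (x : eR) := if x == 0 then 0 else x ^+ m.
Definition corner_unit := [pred x : eR | x != 0].

Fact corner_mulVr : {in corner_unit, left_inverse 1 corner_inv *%R}.
Proof.
by move=> x x_neq0; rewrite /corner_inv (negPf x_neq0) -exprSr corner_expS.
Qed.
Fact corner_mulrV : {in corner_unit, right_inverse 1 corner_inv *%R}.
Proof.
by move=> x x_neq0; rewrite /corner_inv (negPf x_neq0) -exprS corner_expS.
Qed.
Fact corner_unitP (x y : eR) : y * x = 1 /\ x * y = 1 -> corner_unit x.
Proof.
by case=> _ xy1; apply: contra_eq_neq xy1 => ->; rewrite mul0r eq_sym oner_neq0.
Qed.
Fact corner_inv_out : {in [predC corner_unit], corner_inv =1 id}.
Proof. by move=> x; rewrite inE /= negbK /corner_inv => /eqP->; rewrite eqxx. Qed.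
HB.instance Definition _ := GRing.NzRing_hasMulInverse.Build eR
  corner_mulVr corner_mulrV corner_unitP corner_inv_out.

Fact corner_domain : GRing.integral_domain_axiom eR.
Proof.
move=> x y xy0; apply/orP.
have [x0 | x_neq0] := eqVneq x 0; [by left; apply/eqP | right].
by rewrite -(mulKr (x_neq0 : x \is a GRing.unit) y) xy0 mulr0.
Qed.
HB.instance Definition _ := GRing.PzRing_hasCommutativeMul.Build eR
  (finDomain_mulrC corner_domain).
HB.instance Definition _ := GRing.ComUnitRing_isIntegral.Build eR corner_domain.
HB.instance Definition _ := GRing.UnitRing_isField.Build eR
  (finDomain_field corner_domain).

Definition corner_field : finFieldType := eR.
Definition corner_field_proj (x : R) : corner_field := corner_proj eC ee e_neq0 x.

Lemma corner_field_expS (x : corner_field) : x != 0 -> x ^+ m.+1 = 1.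
Proof. exact: corner_expS. Qed.
End CornerField.

Section FinFieldExp.
Variable F : finFieldType.

Lemma dvdn_pred_card_unity (d : nat) :
  (forall x : F, x != 0 -> x ^+ d = 1) -> (#|F|.-1 %| d)%N.
Proof.
move=> unity; have /cyclicP[u Hu] := field_unit_group_cyclic [set: {unit F}]%G.
rewrite -card_finField_unit Hu -orderE order_dvdn; apply/eqP/val_inj.
by rewrite FinRing.val_unitX unity // -unitfE (valP u).
Qed.

Lemma expf_dvdn_pred_card (d : nat) :
  (#|F|.-1 %| d)%N -> forall x : F, x ^+ d.+1 = x.
Proof.
move=> /dvdnP[c ->] x; have [-> | x_neq0] := eqVneq x 0.
  by rewrite expr0n.
have x_unity : x ^+ #|F|.-1 = 1.
  apply: (mulfI x_neq0); rewrite mulr1 -exprS prednK ?expf_card //.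
  exact/ltnW/card_finNzRing_gt1.
by rewrite exprS mulnC exprM x_unity expr1n mulr1.
Qed.
End FinFieldExp.

Section IsoProd.
Variables (R : nzRingType) (k : nat) (F : 'I_k -> fieldType).
Variable f : R -> forall i : 'I_k, F i.
Hypothesis fiso : @ring_iso_prod R k (fun i => F i : nzRingType) f.

Lemma iso_prod_inj : injective f.
Proof. by case: fiso => /bij_inj. Qed.

Lemma iso_prod0 i : f 0 i = 0.
Proof. by case: fiso => _ [fD _]; apply: (@addrI _ (f 0 i)); rewrite -fD !addr0. Qed.

Lemma iso_prodM x y i : f (x * y) i = f x i * f y i.
Proof. by case: fiso => _ [_ [->]]. Qed.

Lemma iso_prod1 i : f 1 i = 1.
Proof. by case: fiso => _ [_ [_ ->]]. Qed.

Lemma iso_prodX x n i : f (x ^+ n) i = f x i ^+ n.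
Proof. by elim: n => [|n IHn]; rewrite ?iso_prod1 // !exprS iso_prodM IHn. Qed.

Lemma iso_prod_eq0 x : (x == 0) = [forall i, f x i == 0].
Proof.
apply/eqP/forallP => [-> i | fx0]; first by rewrite iso_prod0.
apply: iso_prod_inj; apply: functional_extensionality_dep => i.
by rewrite iso_prod0; apply/eqP.
Qed.

Lemma iso_prod_gt0 : (0 < k)%N.
Proof.
rewrite lt0n; apply/eqP => k0; have := oner_neq0 R.
rewrite iso_prod_eq0 => /forallPn[i _].
by have := ltn_ord i; rewrite [X in (_ < X)%N]k0.
Qed.

Lemma iso_prod_mulC (x y : R) : x * y = y * x.
Proof.
apply: iso_prod_inj; apply: functional_extensionality_dep => i.
by rewrite !iso_prodM mulrC.
Qed.

Lemma iso_prod_inv (x : R) :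
  (forall i, f x i != 0) -> exists y, y * x = 1 /\ x * y = 1.
Proof.
case: fiso => -[g fK gK] _ fx_neq0; exists (g (fun i => (f x i)^-1)).
by split; apply: iso_prod_inj; apply: functional_extensionality_dep => i;
  rewrite iso_prodM gK iso_prod1 ?mulVf ?mulfV.
Qed.

Lemma iso_prod_not_field : (1 < k)%N -> ~ is_field R.
Proof.
move=> k_gt1 [_ Rinv]; pose i0 : 'I_k := Ordinal (ltnW k_gt1).
pose i1 : 'I_k := Ordinal k_gt1.
case: fiso => -[g fK gK] _.
pose a := g (fun i => if i == i0 then 1 else 0).
have fa i : f a i = if i == i0 then 1 else 0 by rewrite /a gK.
have [|y [ya1 _]] := Rinv a.
  by rewrite iso_prod_eq0; apply/forallPn; exists i0; rewrite fa eqxx oner_neq0.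
by have /eqP := iso_prod1 i1; rewrite -ya1 iso_prodM fa mulr0 eq_sym oner_eq0.
Qed.

Lemma is_field_iso_prod : is_field R <-> k = 1%N.
Proof.
split=> [Rfield | k1].
  apply/eqP; rewrite eqn_leq iso_prod_gt0 andbT leqNgt.
  by apply/negP => /iso_prod_not_field/(_ Rfield).
have ord0E (i : 'I_k) : val i = 0%N.
  by have := ltn_ord i; rewrite [X in (_ < X)%N]k1 ltnS leqn0 => /eqP.
split=> [x y | x]; first exact: iso_prod_mulC.
rewrite iso_prod_eq0 => /forallPn[i0 fx_neq0]; apply: iso_prod_inv => i.
by rewrite (_ : i = i0) //; apply: val_inj; rewrite !ord0E.
Qed.
End IsoProd.

Section PrimDecomposition.
Variables (R : finNzRingType) (m : nat).
Hypothesis expR : forall a : R, a ^+ m.+2 = a.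

Local Notation k := #|prim_idem R|.
Local Notation idem i := (enum_val (A := prim_idem R) i).

Definition prim_factor (i : 'I_k) : finFieldType :=
  corner_field expR (enum_valP i).

Definition prim_decomp (x : R) (i : 'I_k) : prim_factor i :=
  corner_field_proj expR (enum_valP i) x.

Local Notation val_at i y := (val (y : corner _ _ _) : R) (only parsing).

Lemma prim_decompE x i : val_at i (prim_decomp x i) = x * idem i.
Proof. by []. Qed.

Lemma sum_idem : \sum_(i < k) idem i = 1.
Proof. by rewrite -(sum_prim_idem expR) (big_enum_val (fun e : R => e)). Qed.

Lemma idem_orth i j : i != j -> idem i * idem j = 0.
Proof.
move=> i_neq_j; apply: (prim_idem_orth expR); rewrite ?enum_valP //.
by apply: contra_neq i_neq_j => /enum_val_inj.
Qed.

Lemma prim_decomp_iso :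
  @ring_iso_prod R k (fun i => prim_factor i : nzRingType) prim_decomp.
Proof.
have idem_idem i : idem i * idem i = idem i by case/prim_idemP: (enum_valP i).
split; last split; last split.
- exists (fun y => \sum_(i < k) val_at i (y i)).
    move=> x; under eq_bigr do rewrite prim_decompE.
    by rewrite -mulr_sumr sum_idem mulr1.
  move=> y; apply: functional_extensionality_dep => i; apply: val_inj.
  rewrite prim_decompE mulr_suml (bigD1 i) //= corner_mule big1 ?addr0 // => j j_neq_i.
  by rewrite -(corner_mule (y j)) -mulrA idem_orth ?mulr0.
- by move=> x y i; apply: val_inj; rewrite corner_valD !prim_decompE mulrDl.
- move=> x y i; apply: val_inj; rewrite corner_valM !prim_decompE.
  have -> : x * idem i * (y * idem i) = x * (idem i * y) * idem i.
    by rewrite !mulrA.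
  rewrite (prim_idem_central expR (enum_valP i)) !mulrA.
  by rewrite -[x * y * idem i * idem i]mulrA idem_idem.
- by move=> i; apply: val_inj.
Qed.

Lemma prim_factor_expS i (y : prim_factor i) : y != 0 -> y ^+ m.+1 = 1.
Proof. exact: corner_field_expS. Qed.
End PrimDecomposition.

Theorem theorem2p1 (R : finNzRingType) :
  carmichael_ring R <->
  exists (k : nat) (F : 'I_k -> finFieldType) (f : R -> forall i : 'I_k, F i),
    (2 <= k)%N /\ @ring_iso_prod R k (fun i => F i : nzRingType) f /\
    (forall i : 'I_k, (#|F i|.-1 %| #|R|.-1)%N).
Proof.
have [m cardR] : exists m, #|R| = m.+2.
  by case: #|R| (card_finNzRing_gt1 R) => [|[|m]] //; exists m.
rewrite /carmichael_ring cardR /=; split.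
- case=> not_field expR; have iso := prim_decomp_iso expR.
  exists #|prim_idem R|, (prim_factor expR), (prim_decomp expR); split; last split.
  + rewrite ltn_neqAle (iso_prod_gt0 iso) andbT eq_sym.
    by apply/eqP => /(is_field_iso_prod iso)/not_field.
  + exact: iso.
  + by move=> i; apply: dvdn_pred_card_unity; apply: prim_factor_expS.
- case=> k [F [f [k_ge2 [fiso dvd_F]]]].
  split; first exact: iso_prod_not_field fiso k_ge2.
  move=> a; apply: (iso_prod_inj fiso); apply: functional_extensionality_dep => i.
  by rewrite (iso_prodX fiso); apply: expf_dvdn_pred_card.
Qed.
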